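(* Let $k\ge1$, let $A_k$ be the matrix defined below, let $\mathbf{b}\in\mathbb{Z}^{2k+1}$ and let $s\in[l(\mathbf{b}),u(\mathbf{b})]$ be an integer. Then the induced subgraph of $G_{A_k,\mathbf{b},\mathcal{G}(A_k)}$ on the vertex set $C_s(\mathbf{b})$ equals the induced subgraph of $G_{A_k,\mathbf{b},\mathcal{R}_{\mathrm{lex}}(A_k)}$ on $C_s(\mathbf{b})$.
   Context: $I_k$ is the $k\times k$ identity, $\mathbf{1}_k$ the all-ones vector in $\mathbb{Z}^k$. Define $$A_k=\begin{pmatrix} I_k & I_k & 0 & 0 & -\mathbf{1}_k & \mathbf{0}\\ 0&0&I_k&I_k&\mathbf{0}&-\mathbf{1}_k\\ 0&0&0&0&1&1\end{pmatrix}\in\mathbb{Z}^{(2k+1)\times(4k+2)}$$ (zero blocks of appropriate sizes; last two columns are single columns). Fiber: $\mathcal{F}_A(\mathbf{b})=\{\mathbf{u}\in\mathbb{Z}^n_{\ge0}:A\mathbf{u}=\mathbf{b}\}$; for $\mathcal{M}\subset\mathbb{Z}^n$, $G_{A,\mathbf{b},\mathcal{M}}$ is the graph on $\mathcal{F}_A(\mathbf{b})$ with distinct $\mathbf{u},\mathbf{v}$ adjacent iff $\mathbf{u}-\mathbf{v}\in\pm\mathcal{M}$. The Graver basis $\mathcal{G}(A)$ is the set of $\sqsubseteq$-minimal elements of $(\ker A\cap\mathbb{Z}^n)\setminus\{\mathbf{0}\}$, where $\mathbf{u}\sqsubseteq\mathbf{v}$ iff $u_iv_i\ge0$ and $|u_i|\le|v_i|$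 for all $i$. The toric ideal is $I_A=\langle\mathbf{x}^{\mathbf{u}^+}-\mathbf{x}^{\mathbf{u}^-}:\mathbf{u}\in\ker A\cap\mathbb{Z}^n\rangle$; $\prec_{\mathrm{lex}}$ is the lexicographic term order ($\mathbf{u}\prec_{\mathrm{lex}}\mathbf{v}$ iff $u_i<v_i$ at the first differing index); $\mathcal{R}_{\mathrm{lex}}(A)$ is the set of $\mathbf{u}$ such that $\mathbf{x}^{\mathbf{u}^+}-\mathbf{x}^{\mathbf{u}^-}$ (leading term $\mathbf{x}^{\mathbf{u}^+}$) lies in the reduced Gröbner basis of $I_A$ w.r.t. $\prec_{\mathrm{lex}}$. For $\mathbf{b}=(\mathbf{w}_1,\mathbf{w}_2,c)$ with $\mathbf{w}_1,\mathbf{w}_2\in\mathbb{Z}^k$, $c\in\mathbb{Z}$: $\mathbf{w}^-$ has entries $\max(-w_i,0)$, $l(\mathbf{b}):=\|\mathbf{w}_1^-\|_\infty$, $u(\mathbf{b}):=c-\|\mathbf{w}_2^-\|_\infty$, and $C_s(\mathbf{b}):=\{\mathbf{u}\in\mathcal{F}_{A_k}(\mathbf{b}):u_{4k+1}=s\}$. *)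

From HB Require Import structures.
From mathcomp Require Import all_boot all_order all_algebra.
From mathcomp Require Import mpoly.
Set Implicit Arguments. Unset Strict Implicit. Unset Printing Implicit Defensive.
Import Order.TTheory GRing.Theory Num.Theory.
Local Open Scope ring_scope.

(* Integer vectors are column vectors 'cV[int]_n; indices are 0-based. *)

(* The matrix A_k in Z^{(2k+1) x (4k+2)} (0-based rows/columns):
   rows 0..k-1   : I_k in columns 0..k-1 and k..2k-1, -1 in column 4k
   rows k..2k-1  : I_k in columns 2k..3k-1 and 3k..4k-1, -1 in column 4k+1
   row 2k        : 1 in columns 4k and 4k+1. *)
Definition A_entry (k i j : nat) : int :=
  if (i < k)%N then
    (if (j == i)%N || (j == i + k)%N then 1
     else if (j == 4 * k)%N then -1 else 0)
  else if (i < 2 * k)%N then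
    (if (j == i + k)%N || (j == i + 2 * k)%N then 1
     else if (j == 4 * k + 1)%N then -1 else 0)
  else
    (if (j == 4 * k)%N || (j == 4 * k + 1)%N then 1 else 0).

Definition A_mat (k : nat) : 'M[int]_(2 * k + 1, 4 * k + 2) :=
  \matrix_(i < 2 * k + 1, j < 4 * k + 2) A_entry k i j.

(* entry i (0-based, as a nat) of a column vector; 0 out of range *)
Definition vat (m : nat) (v : 'cV[int]_m) (i : nat) : int :=
  match @insub nat (fun j => (j < m)%N) _ i with
  | Some j => v j 0
  | None => 0
  end.

Definition in_fiber (m n : nat) (A : 'M[int]_(m, n)) (b : 'cV[int]_m)
  (u : 'cV[int]_n) : Prop :=
  (forall i, 0 <= u i 0) /\ A *m u = b.

Definition fiber_adj (m n : nat) (A : 'M[int]_(m, n)) (b : 'cV[int]_m)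
  (M : 'cV[int]_n -> Prop) (u v : 'cV[int]_n) : Prop :=
  in_fiber A b u /\ in_fiber A b v /\ u <> v /\ (M (u - v) \/ M (v - u)).

Definition conf_le (n : nat) (u v : 'cV[int]_n) : Prop :=
  forall i, 0 <= u i 0 * v i 0 /\ `|u i 0| <= `|v i 0|.

Definition in_lattice (m n : nat) (A : 'M[int]_(m, n)) (u : 'cV[int]_n) : Prop :=
  A *m u = 0.

Definition graver (m n : nat) (A : 'M[int]_(m, n)) (u : 'cV[int]_n) : Prop :=
  in_lattice A u /\ u <> 0 /\
  forall v, in_lattice A v -> v <> 0 -> conf_le v u -> v = u.

Definition ppart (x : int) : nat := absz (Num.max x 0).

Definition posm (n : nat) (u : 'cV[int]_n) : 'X_{1..n} :=
  [multinom ppart (u i ord0) | i < n].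
Definition negm (n : nat) (u : 'cV[int]_n) : 'X_{1..n} :=
  [multinom ppart (- u i ord0) | i < n].

Definition binom (K : fieldType) (n : nat) (u : 'cV[int]_n) : {mpoly K[n]} :=
  'X_[posm u] - 'X_[negm u].

Arguments binom K {n} u.

Definition in_ideal (K : fieldType) (n : nat) (S : {mpoly K[n]} -> Prop)
  (f : {mpoly K[n]}) : Prop :=
  exists r : seq ({mpoly K[n]} * {mpoly K[n]}),
    (forall x, x \in r -> S x.2) /\ f = \sum_(x <- r) x.1 * x.2.

Definition toric_ideal (K : fieldType) (m n : nat) (A : 'M[int]_(m, n))
  (f : {mpoly K[n]}) : Prop :=
  in_ideal (fun g => exists u, in_lattice A u /\ g = binom K u) f.

Arguments toric_ideal K {m n} A f.

Definition lex_lt (n : nat) (m1 m2 : 'X_{1..n}) : bool :=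
  [exists i : 'I_n, (m1 i < m2 i)%N &&
     [forall j : 'I_n, (j < i)%N ==> (m1 j == m2 j)]].
Definition lex_le (n : nat) (m1 m2 : 'X_{1..n}) : bool :=
  (m1 == m2) || lex_lt m1 m2.

Definition is_LM (K : fieldType) (n : nat) (p : {mpoly K[n]}) (mm : 'X_{1..n})
  : Prop :=
  mm \in msupp p /\ forall m', m' \in msupp p -> lex_le m' mm.

Definition mdivides (n : nat) (a b : 'X_{1..n}) : bool :=
  [forall i : 'I_n, (a i <= b i)%N].

(* G is the reduced Groebner basis of the ideal I w.r.t. lex:
   - G subset I, and <LT(I)> = <LT(G)> (every leading monomial of a nonzero
     element of I is divisible by the leading monomial of some g in G);
   - every g in G has leading coefficient 1;
   - for g in G, no monomial of g lies in <LT(G - {g})>. *)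
Definition is_reduced_GB (K : fieldType) (n : nat) (I : {mpoly K[n]} -> Prop)
  (G : seq {mpoly K[n]}) : Prop :=
  (forall g, g \in G -> I g) /\
  (forall f, I f -> f != 0 -> forall mf, is_LM f mf ->
      exists g, exists mg, [/\ g \in G, is_LM g mg & mdivides mg mf]) /\
  (forall g, g \in G -> exists mg, is_LM g mg /\ g@_mg = 1) /\
  (forall g g', g \in G -> g' \in G -> g' != g ->
      forall mg', is_LM g' mg' -> forall mm, mm \in msupp g ->
        ~~ mdivides mg' mm).

Definition R_lex (K : fieldType) (m n : nat) (A : 'M[int]_(m, n))
  (u : 'cV[int]_n) : Prop :=
  exists G, is_reduced_GB (toric_ideal K A) G /\
    binom K u \in G /\ is_LM (binom K u) (posm u).

Arguments R_lex K {m n} A u.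

(* b = (w1, w2, c):  w1 = entries 0..k-1, w2 = entries k..2k-1, c = entry 2k *)
Definition l_b (k : nat) (b : 'cV[int]_(2 * k + 1)) : int :=
  \big[Num.max/0]_(i < k) Num.max (- vat b i) 0.
Definition u_b (k : nat) (b : 'cV[int]_(2 * k + 1)) : int :=
  vat b (2 * k)%N - \big[Num.max/0]_(i < k) Num.max (- vat b (k + i)%N) 0.

(* C_s(b) = { u in F_{A_k}(b) : u_{4k+1} = s }  (u_{4k+1} is 0-based index 4k) *)
Definition C_s (k : nat) (b : 'cV[int]_(2 * k + 1)) (s : int)
  (u : 'cV[int]_(4 * k + 2)) : Prop :=
  in_fiber (A_mat k) b u /\ vat u (4 * k)%N = s.

(* Two points of C_s(b) agree in (0-based) coordinate 4k, so their difference d lies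
   in ker A_k with d_{4k} = d_{4k+1} = 0, i.e. d_a + d_b = 0 for the pairs b = a + k with
   a < k or 2k <= a < 3k.  The Graver elements of this shape are exactly the moves
   +-(e_a - e_b).  The reduced lex Groebner basis of I_{A_k} consists of the binomials
   x_a - x_b of these moves and of x_{4k} x_k ... x_{2k-1} - x_{4k+1} x_{3k} ... x_{4k-1}:
   every monomial divisible by none of their leading terms is lex-minimal in its A_k-degree.
   Conversely, if x^{d+} - x^{d-} belongs to a reduced basis and d_a <> 0, reducedness forces
   x^{d+} to divide x_a, which pins d down to e_a - e_b. *)
From HB Require Import structures.
From mathcomp Require Import all_boot all_order all_algebra.
From mathcomp Require Import mpoly zify ring.
Import Order.TTheory GRing.Theory Num.Theory.
Set Implicit Arguments. Unset Strict Implicit. Unset Printing Implicit Defensive.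
Local Open Scope ring_scope.

Section Lex.
Variable N : nat.
Implicit Types m : 'X_{1..N}.

Lemma lex_ltP m1 m2 : lex_lt m1 m2 <->
  exists i : 'I_N, (m1 i < m2 i)%N /\ forall j : 'I_N, (j < i)%N -> m1 j = m2 j.
Proof.
split.
  by case/existsP => i /andP[h /forallP H]; exists i; split => // j hj;
    apply/eqP; exact: (implyP (H j) hj).
case=> i [h H]; apply/existsP; exists i; rewrite h /=.
by apply/forallP => j; apply/implyP => hj; rewrite H.
Qed.

Lemma lex_lt_asym m1 m2 : lex_lt m1 m2 -> ~ lex_lt m2 m1.
Proof.
move=> /lex_ltP [i [h1 H1]] /lex_ltP [j [h2 H2]].
case: (ltngtP i j) => hij.
- by move: h1; rewrite H2 // ltnn.
- by move: h2; rewrite H1 // ltnn.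
- have e : i = j by apply: val_inj.
  by subst j; move: (ltn_trans h1 h2); rewrite ltnn.
Qed.

Lemma lex_le_anti m1 m2 : lex_le m1 m2 -> lex_le m2 m1 -> m1 = m2.
Proof.
rewrite /lex_le; case: eqP => [//|_] /= h1; case: eqP => [//|_] /= h2.
by case: (lex_lt_asym h1 h2).
Qed.

Lemma is_LM_uniq (K : fieldType) (p : {mpoly K[N]}) m1 m2 :
  is_LM p m1 -> is_LM p m2 -> m1 = m2.
Proof. by case=> h1 H1 [h2 H2]; apply: lex_le_anti; [apply: H2|apply: H1]. Qed.

Lemma msupp_binomial (K : fieldType) m1 m2 m : m1 != m2 ->
  (m \in msupp ('X_[m1] - 'X_[m2] : {mpoly K[N]})) = (m == m1) || (m == m2).
Proof.
move=> ne; rewrite mcoeff_msupp mcoeffB !mcoeffX.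
case: (eqVneq m m1) => [->|_] /=.
  by rewrite [m2 == m1]eq_sym (negbTE ne) subr0 oner_eq0.
case: (eqVneq m m2) => _ /=; first by rewrite sub0r oppr_eq0 oner_eq0.
by rewrite subr0 eqxx.
Qed.

Lemma is_LM_binomial (K : fieldType) m1 m2 : lex_lt m2 m1 ->
  is_LM ('X_[m1] - 'X_[m2] : {mpoly K[N]}) m1 /\
  ('X_[m1] - 'X_[m2] : {mpoly K[N]})@_m1 = 1.
Proof.
move=> h; have ne : m1 != m2.
  by apply/eqP => e; move: h; rewrite e => h; exact: (lex_lt_asym h h).
split; last by rewrite mcoeffB !mcoeffX eqxx eq_sym (negbTE ne) subr0.
split; first by rewrite msupp_binomial // eqxx.
by move=> m; rewrite msupp_binomial // => /orP[]/eqP ->; rewrite /lex_le ?eqxx ?h ?orbT.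
Qed.

End Lex.

Section Entries.
Variable m : nat.
Implicit Types u v : 'cV[int]_m.

Lemma vatE v (i : 'I_m) : vat v i = v i 0.
Proof. by rewrite /vat; case: insubP => [j _ /val_inj -> //|]; rewrite ltn_ord. Qed.

Lemma vat_out v j : (m <= j)%N -> vat v j = 0.
Proof. by move=> h; rewrite /vat insubF // ltnNge h. Qed.

Lemma vat0 j : vat (0 : 'cV[int]_m) j = 0.
Proof. by rewrite /vat; case: insubP => [i _ _|_]; rewrite ?mxE. Qed.

Lemma vatN v j : vat (- v) j = - vat v j.
Proof. by rewrite /vat; case: insubP => [i _ _|_]; rewrite ?mxE ?oppr0. Qed.

Lemma vatB u v j : vat (u - v) j = vat u j - vat v j.
Proof. by rewrite /vat; case: insubP => [i _ _|_]; rewrite ?mxE ?subr0. Qed.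

Lemma vatZ c v j : vat (c *: v) j = c * vat v j.
Proof. by rewrite /vat; case: insubP => [i _ _|_]; rewrite ?mxE ?mulr0. Qed.

Lemma vat_col (F : nat -> int) j : (forall j, (m <= j)%N -> F j = 0) ->
  vat (\col_(l < m) F l) j = F j.
Proof.
move=> F0; case: (ltnP j m) => hj; last by rewrite vat_out // F0.
by rewrite /vat insubT /= mxE.
Qed.

Lemma eq_vat u v : (forall l, (l < m)%N -> vat u l = vat v l) -> u = v.
Proof. by move=> H; apply/matrixP => i j; rewrite ord1 -!vatE; exact: H. Qed.

Lemma sum_delta_vat v (a : nat) :
  \sum_(j < m) ((j == a :> nat)%:R * v j 0) = vat v a.
Proof.
case: (ltnP a m) => ha.
  rewrite (bigD1 (Ordinal ha)) //= eqxx mul1r -vatE big1 ?addr0 // => j.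
  by rewrite -val_eqE /= => /negbTE ->; rewrite mul0r.
rewrite vat_out // big1 // => j _; case: eqP => [e|]; last by rewrite mul0r.
by have := ltn_ord j; rewrite e ltnNge ha.
Qed.

Lemma conf_le_vat u v : conf_le u v <->
  forall l, (l < m)%N -> 0 <= vat u l * vat v l /\ `|vat u l| <= `|vat v l|.
Proof.
split; last by move=> H i; rewrite -!vatE; apply: H.
by move=> H l hl; rewrite /vat insubT; apply: H.
Qed.

End Entries.

Lemma graver_opp (r n : nat) (A : 'M[int]_(r, n)) u : graver A u -> graver A (- u).
Proof.
case=> hu [nz H]; split; first by rewrite /in_lattice mulmxN hu oppr0.
split; first by move/eqP; rewrite oppr_eq0 => /eqP.
move=> v hv nzv hc; rewrite -[v]opprK; congr (- _); apply: H.
- by rewrite /in_lattice mulmxN hv oppr0.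
- by move/eqP; rewrite oppr_eq0 => /eqP.
- by move=> i; move: (hc i); rewrite !mxE mulrN mulNr !normrN.
Qed.

Section Lattice.
Variable k : nat.
Local Notation n := (4 * k + 2)%N.
Local Notation A := (A_mat k).

Lemma size_gt0 : (0 < n)%N. Proof. by rewrite addn2. Qed.

Definition idx (j : nat) : 'I_n := insubd (Ordinal size_gt0) j.

Lemma idxK j : (j < n)%N -> val (idx j) = j.
Proof. by move=> h; rewrite /idx val_insubd h. Qed.

Lemma idx_val (i : 'I_n) : idx i = i.
Proof. by apply: val_inj; rewrite idxK. Qed.

Lemma vat_idx (v : 'cV[int]_n) j : (j < n)%N -> vat v j = v (idx j) 0.
Proof. by move=> h; rewrite -vatE idxK. Qed.

Lemma A_entry_delta (i j : nat) : (i < 2 * k + 1)%N ->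
  A_entry k i j =
  if (i < k)%N then (j == i)%:R + (j == (i + k)%N)%:R - (j == (4 * k)%N)%:R
  else if (i < 2 * k)%N then (j == (i + k)%N)%:R + (j == (i + 2 * k)%N)%:R - (j == (4 * k + 1)%N)%:R
  else (j == (4 * k)%N)%:R + (j == (4 * k + 1)%N)%:R.
Proof.
move=> hi; rewrite /A_entry.
case: ifP => h1; [|case: ifP => h2]; do ![case: eqP => ?]; try (by []); lia.
Qed.

Lemma A_mul_row (v : 'cV[int]_n) (i : 'I_(2 * k + 1)) : (A *m v) i 0 =
  if (i < k)%N then vat v i + vat v (i + k)%N - vat v (4 * k)%N
  else if (i < 2 * k)%N then vat v (i + k)%N + vat v (i + 2 * k)%N - vat v (4 * k + 1)%N
  else vat v (4 * k)%N + vat v (4 * k + 1)%N.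
Proof.
rewrite mxE; under eq_bigr do rewrite mxE A_entry_delta //.
by case: ifP => _; [|case: ifP => _]; rewrite -?sum_delta_vat -?big_split -?sumrB /=;
  apply: eq_bigr => j _; ring.
Qed.

Lemma ker_rows (d : 'cV[int]_n) : A *m d = 0 ->
  [/\ (forall i, (i < k)%N -> vat d i + vat d (k + i)%N = vat d (4 * k)%N),
      (forall i, (i < k)%N -> vat d (2 * k + i)%N + vat d (3 * k + i)%N = vat d (4 * k + 1)%N)
    & vat d (4 * k)%N + vat d (4 * k + 1)%N = 0].
Proof.
move=> Ad0; have row (i : nat) (hi : (i < 2 * k + 1)%N) :=
  congr1 (fun M : 'cV[int]_(2 * k + 1) => M (Ordinal hi) 0) Ad0.
split.
- move=> i hi; have := row i ltac:(lia); rewrite A_mul_row mxE /= hi [(i + k)%N]addnC; lia.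
- move=> i hi; have := row (k + i)%N ltac:(lia); rewrite A_mul_row mxE /=.
  rewrite ifF ?ifT; [|lia..].
  have -> : (k + i + k = 2 * k + i)%N by lia.
  have -> : (k + i + 2 * k = 3 * k + i)%N by lia.
  lia.
- by have := row (2 * k)%N ltac:(lia); rewrite A_mul_row mxE /= ltnn ifF //; lia.
Qed.

(* For such pairs, the moves e_a - e_b span ker A_k on the hyperplane d_{4k} = 0. *)
Definition paired (a b : nat) :=
  (exists i, (i < k)%N /\ a = i /\ b = (k + i)%N) \/
  (exists i, (i < k)%N /\ a = (2 * k + i)%N /\ b = (3 * k + i)%N).

Definition simple_move (a b : nat) : 'cV[int]_n :=
  \col_(j < n) ((j == a :> nat)%:R - (j == b :> nat)%:R).

Definition bridge_move : 'cV[int]_n :=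
  \col_(j < n) ((j == (4 * k)%N :> nat)%:R + ((k <= j < 2 * k)%N)%:R
    - (j == (4 * k + 1)%N :> nat)%:R - ((3 * k <= j < 4 * k)%N)%:R).

Lemma paired_bounds a b : paired a b ->
  [/\ (a < b)%N, (b < 4 * k)%N & (a < n)%N /\ (b < n)%N].
Proof. by case=> [[i [hi [-> ->]]]|[i [hi [-> ->]]]]; split; lia. Qed.

Lemma paired_eq a b a' b' : paired a b -> paired a' b' ->
  [|| a == a', a == b', b == a' | b == b'] -> a = a' /\ b = b'.
Proof.
case=> [[i [hi [-> ->]]]|[i [hi [-> ->]]]] [[i' [hi' [-> ->]]]|[i' [hi' [-> ->]]]];
  do ![case: eqP => ?]; simpl; try done; lia.
Qed.

Lemma vat_simple_move a b j : (a < n)%N -> (b < n)%N ->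
  vat (simple_move a b) j = (j == a)%:R - (j == b)%:R.
Proof.
move=> ha hb; rewrite (@vat_col _ (fun l => (l == a)%:R - (l == b)%:R)) // => l hl.
by do 2!(case: eqP => ?); rewrite ?subrr //; lia.
Qed.

Lemma vat_bridge_move j : vat bridge_move j =
  if (j < k)%N then 0 else if (j < 2 * k)%N then 1 else if (j < 3 * k)%N then 0
  else if (j < 4 * k)%N then -1 else if j == (4 * k)%N then 1
  else if j == (4 * k + 1)%N then -1 else 0.
Proof.
rewrite (@vat_col _ (fun j => (j == (4 * k)%N)%:R + ((k <= j < 2 * k)%N)%:R
  - (j == (4 * k + 1)%N)%:R - ((3 * k <= j < 4 * k)%N)%:R)) => [|l hl].
  case E1: (j == (4 * k)%N); case E2: (k <= j < 2 * k)%N; case E3 : (j == (4 * k + 1)%N);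
    case E4: (3 * k <= j < 4 * k)%N; do ![case: ifP => ?]; try (by []); lia.
have h1 : (l == (4 * k)%N) = false by apply/eqP; lia.
have h2 : (l == (4 * k + 1)%N) = false by apply/eqP; lia.
have h3 : (k <= l < 2 * k)%N = false by lia.
have h4 : (3 * k <= l < 4 * k)%N = false by lia.
by rewrite h1 h2 h3 h4 /= !mulr0n !subr0 ?addr0.
Qed.

Lemma simple_move_ker a b : paired a b -> A *m simple_move a b = 0.
Proof.
move=> hp; have [_ _ [ha hb]] := paired_bounds hp.
apply/matrixP => r c; rewrite ord1 A_mul_row !vat_simple_move // mxE.
have hr := ltn_ord r.
case: hp => [[i [hi [-> ->]]]|[i [hi [-> ->]]]];
  case: ifP => ?; try case: ifP => ?; do ![case: eqP => ?]; try (by []); lia.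
Qed.

Lemma bridge_move_ker : A *m bridge_move = 0.
Proof.
apply/matrixP => r c; rewrite ord1 A_mul_row !vat_bridge_move mxE.
have hr := ltn_ord r.
do ![case: ifP => ?]; try (by []); lia.
Qed.

Lemma ker_paired (d : 'cV[int]_n) : A *m d = 0 -> vat d (4 * k)%N = 0 ->
  vat d (4 * k + 1)%N = 0 /\ forall a b, paired a b -> vat d a + vat d b = 0.
Proof.
move=> Ad0 d4; have [H1 H2 H3] := ker_rows Ad0.
have d5 : vat d (4 * k + 1)%N = 0 by move: H3; rewrite d4 add0r.
split => // a b [[i [hi [-> ->]]]|[i [hi [-> ->]]]].
  by rewrite H1.
by rewrite H2.
Qed.

Lemma index_cover l : (l < n)%N -> l = (4 * k)%N \/ l = (4 * k + 1)%N \/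
  exists a b, paired a b /\ (l = a \/ l = b).
Proof.
move=> hl; case: (ltnP l k) => h1.
  by right; right; exists l, (k + l)%N; split; [left; exists l|left].
case: (ltnP l (2 * k)) => h2.
  by right; right; exists (l - k)%N, l; split; [left; exists (l - k)%N; split; lia|right].
case: (ltnP l (3 * k)) => h3.
  by right; right; exists l, (l + k)%N; split; [right; exists (l - 2 * k)%N; split; lia|left].
case: (ltnP l (4 * k)) => h4.
  by right; right; exists (l - k)%N, l; split; [right; exists (l - 3 * k)%N; split; lia|right].
lia.
Qed.

Lemma ker_nonzero_pair (d : 'cV[int]_n) : A *m d = 0 -> vat d (4 * k)%N = 0 -> d <> 0 ->
  exists a b, paired a b /\ vat d a != 0.
Proof.
move=> Ad0 d4 nz; have [d5 Hp] := ker_paired Ad0 d4.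
have [l [hl nzl]] : exists l, (l < n)%N /\ vat d l != 0.
  case: (pickP (fun i : 'I_n => d i 0 != 0)) => [i hi|H0]; first by exists i; rewrite vatE.
  by case: nz; apply/matrixP => i j; rewrite ord1 mxE; move/negbFE/eqP: (H0 i).
case: (index_cover hl) => [e|[e|[a [b [hp [e|e]]]]]]; subst l.
- by rewrite d4 eqxx in nzl.
- by rewrite d5 eqxx in nzl.
- by exists a, b.
- exists a, b; split => //; apply: contraNneq nzl => da.
  by have := Hp _ _ hp; rewrite da add0r => ->.
Qed.

Lemma graver_simple_move a b : paired a b -> graver A (simple_move a b).
Proof.
move=> hp; have [ab b4 [ha hb]] := paired_bounds hp.
have ba : (b == a) = false by rewrite gtn_eqF.
have ab' : (a == b) = false by rewrite ltn_eqF.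
split; first exact: simple_move_ker.
split.
  move/(congr1 (fun v => vat v a)); rewrite vat_simple_move // vat0 eqxx ab' /=.
  by move/eqP; rewrite subr0 oner_eq0.
move=> v hv nz /conf_le_vat Hc.
have Hoff l : (l < n)%N -> l != a -> l != b -> vat v l = 0.
  move=> hl la lb; have [_] := Hc l hl.
  by rewrite vat_simple_move // (negbTE la) (negbTE lb) /= subr0 normr0 normr_le0 => /eqP.
have v4 : vat v (4 * k)%N = 0 by apply: Hoff; rewrite ?gtn_eqF //; lia.
have [_ Hp] := ker_paired hv v4.
have vab := Hp a b hp.
have va : vat v a = 1.
  have [] := Hc a ha; rewrite vat_simple_move // eqxx ab' /= subr0.
  case: (eqVneq (vat v a) 0) => [va0|nz']; last by lia.
  case: nz; apply: eq_vat => l hl; rewrite vat0.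
  case: (eqVneq l a) => [->//|la]; case: (eqVneq l b) => [->|lb]; last exact: Hoff.
  by move: vab; rewrite va0 add0r.
apply: eq_vat => l hl; rewrite vat_simple_move //.
case: (eqVneq l a) => [->|la]; first by rewrite va ab' /= subr0.
case: (eqVneq l b) => [->|lb] /=; first by rewrite sub0r; lia.
by rewrite subr0 Hoff.
Qed.

Lemma graver_simple (d : 'cV[int]_n) : A *m d = 0 -> vat d (4 * k)%N = 0 ->
  graver A d -> exists a b, paired a b /\ (d = simple_move a b \/ d = - simple_move a b).
Proof.
move=> Ad0 d4 [_ [nz Hmin]].
have [a [b [hp nza]]] := ker_nonzero_pair Ad0 d4 nz.
have [d5 Hp] := ker_paired Ad0 d4.
have dab := Hp a b hp.
have [ab b4 [ha hb]] := paired_bounds hp.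
have ba : (b == a) = false by rewrite gtn_eqF.
have ab' : (a == b) = false by rewrite ltn_eqF.
pose c : int := if 0 < vat d a then 1 else -1.
have c_sign : c = 1 \/ c = -1 by rewrite /c; case: ifP; [left|right].
have c_pos : 0 < c * vat d a by rewrite /c; case: ifP => h; lia.
have e : c *: simple_move a b = d.
  apply: Hmin.
  - by rewrite /in_lattice -scalemxAr simple_move_ker // scaler0.
  - move/(congr1 (fun v => vat v a)).
    rewrite vatZ vat_simple_move // vat0 eqxx ab' /= subr0; lia.
  - apply/conf_le_vat => l hl; rewrite vatZ vat_simple_move //.
    case: (eqVneq l a) => [->|la]; first by rewrite ab' /= subr0; lia.
    case: (eqVneq l b) => [->|lb] /=; first by rewrite sub0r; lia.
    by rewrite subr0 mulr0 mul0r normr0; split.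
exists a, b; split => //.
by case: c_sign => hc; [left|right]; rewrite -e hc ?scale1r ?scaleN1r.
Qed.
End Lattice.

Lemma binom_toric (K : fieldType) (r n : nat) (A : 'M[int]_(r, n)) u :
  in_lattice A u -> toric_ideal K A (binom K u).
Proof.
move=> hu; exists [:: (1, binom K u)]; split; last by rewrite big_seq1 mul1r.
by move=> x; rewrite inE => /eqP -> /=; exists u.
Qed.

Lemma ppart_diff (x : int) : (ppart x)%:Z - (ppart (- x))%:Z = x.
Proof. rewrite /ppart; lia. Qed.

Section MonomialMap.
Variables (k : nat) (K : fieldType).
Local Notation n := (4 * k + 2)%N.
Local Notation r := (2 * k + 1)%N.
Local Notation A := (A_mat k).

Lemma rsize_gt0 : (0 < r)%N. Proof. by rewrite addn1. Qed.

Definition ridx (t : nat) : 'I_r := insubd (Ordinal rsize_gt0) t.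

Lemma ridxK t : (t < r)%N -> val (ridx t) = t.
Proof. by move=> h; rewrite /ridx val_insubd h. Qed.

Lemma ridx_val (t : 'I_r) : ridx t = t.
Proof. by apply: val_inj; rewrite ridxK. Qed.

(* Adding the last row of A_k to each of the others gives a nonnegative matrix with the
   same kernel; its columns are the exponents of the monomial map below. *)
Definition Apos_entry (t j : nat) : nat :=
  if (t < k)%N then ((j == t) || (j == k + t) || (j == 4 * k + 1))%N
  else if (t < 2 * k)%N then ((j == t + k) || (j == t + 2 * k) || (j == 4 * k))%N
  else ((j == 4 * k) || (j == 4 * k + 1))%N.

Definition Adeg (m : 'X_{1..n}) : 'X_{1..r} :=
  [multinom (\sum_(j < n) Apos_entry t j * m j)%N | t < r].

Definition Acol (j : 'I_n) : 'X_{1..r} := [multinom Apos_entry t j | t < r].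

Definition toric_hom (p : {mpoly K[n]}) : {mpoly K[r]} :=
  mmap (@mpolyC r K) (fun j => 'X_[Acol j]) p.

Lemma mmap1_Adeg m : mmap1 (fun j => 'X_[Acol j] : {mpoly K[r]}) m = 'X_[Adeg m].
Proof.
rewrite /mmap1 mprodXnE; congr ('X_[_]); apply/mnmP => t.
by rewrite mnm_sumE mnmE; apply: eq_bigr => j _; rewrite mulmnE mnmE mulnC.
Qed.

Lemma toric_hom_coef f t :
  (toric_hom f)@_t = \sum_(m <- msupp f) f@_m * (Adeg m == t)%:R.
Proof.
rewrite /toric_hom /mmap raddf_sum /=; apply: eq_bigr => m _.
by rewrite mcoeffCM mmap1_Adeg mcoeffX.
Qed.

Lemma sum_delta_mnm (m : 'X_{1..n}) a : (a < n)%N ->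
  (\sum_(j < n) ((j == a :> nat) * m j))%N = m (idx k a).
Proof.
move=> ha; rewrite (bigD1 (idx k a)) //= idxK // eqxx mul1n big1 ?addn0 // => j.
by rewrite -val_eqE /= idxK // => /negbTE ->.
Qed.

Lemma Adeg_row (m : 'X_{1..n}) t : (t < r)%N -> Adeg m (ridx t) =
  if (t < k)%N then (m (idx k t) + m (idx k (k + t)) + m (idx k (4 * k + 1)))%N
  else if (t < 2 * k)%N then (m (idx k (t + k)) + m (idx k (t + 2 * k)) + m (idx k (4 * k)))%N
  else (m (idx k (4 * k)) + m (idx k (4 * k + 1)))%N.
Proof.
move=> ht; rewrite mnmE ridxK //.
have E j : Apos_entry t j =
  if (t < k)%N then ((j == t) + (j == k + t) + (j == 4 * k + 1))%N
  else if (t < 2 * k)%N then ((j == t + k) + (j == t + 2 * k) + (j == 4 * k))%N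
  else ((j == 4 * k) + (j == 4 * k + 1))%N.
  rewrite /Apos_entry.
  by case: ifP => ?; [|case: ifP => ?]; do ![case: eqP => ?]; try (by []); lia.
under eq_bigr do rewrite E.
by case: ifP => _; [|case: ifP => _]; rewrite -?sum_delta_mnm; try lia;
  rewrite -?big_split /=; apply: eq_bigr => j _; rewrite ?mulnDl.
Qed.

Lemma posm_idx (u : 'cV[int]_n) j : (j < n)%N -> posm u (idx k j) = ppart (vat u j).
Proof. by move=> h; rewrite /posm mnmE vat_idx. Qed.

Lemma negm_idx (u : 'cV[int]_n) j : (j < n)%N -> negm u (idx k j) = ppart (- vat u j).
Proof. by move=> h; rewrite /negm mnmE vat_idx. Qed.

Lemma Adeg_posm_negm (u : 'cV[int]_n) : A *m u = 0 -> Adeg (posm u) = Adeg (negm u).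
Proof.
move=> Au0; have [H1 H2 H3] := ker_rows Au0.
apply/mnmP => t; rewrite -(ridx_val t) !Adeg_row //.
have P j : (j < n)%N -> (posm u (idx k j))%:Z = (negm u (idx k j))%:Z + vat u j.
  by move=> hj; rewrite posm_idx // negm_idx //; have := ppart_diff (vat u j); lia.
have P4 := P (4 * k)%N ltac:(lia); have P5 := P (4 * k + 1)%N ltac:(lia).
case: ifP => h1; [|case: ifP => h2].
- have := H1 t h1; have := P t ltac:(lia); have := P (k + t)%N ltac:(lia); lia.
- have := H2 (t - k)%N ltac:(lia).
  have -> : (2 * k + (t - k) = t + k)%N by lia.
  have -> : (3 * k + (t - k) = t + 2 * k)%N by lia.
  have := P (t + k)%N ltac:(lia); have := P (t + 2 * k)%N ltac:(lia); lia.
- lia.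
Qed.

Lemma toric_hom_binom (u : 'cV[int]_n) : A *m u = 0 -> toric_hom (binom K u) = 0.
Proof.
move=> Au0; rewrite /binom /toric_hom rmorphB /= !mmapX !mmap1_Adeg.
by rewrite Adeg_posm_negm // subrr.
Qed.

Lemma toric_hom_ideal f : toric_ideal K A f -> toric_hom f = 0.
Proof.
case=> rs [Hr ->]; rewrite /toric_hom rmorph_sum /=; apply: big1_seq => x /andP[_ hx].
have [u [hu ->]] := Hr x hx.
by have := toric_hom_binom hu; rewrite rmorphM /= /toric_hom => ->; rewrite mulr0.
Qed.
End MonomialMap.

Section Standard.
Variable k : nat.
Local Notation n := (4 * k + 2)%N.
Local Notation idx := (idx k).

Lemma Adeg_eq_rows (m m' : 'X_{1..n}) : Adeg m = Adeg m' ->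
  [/\ forall t, (t < k)%N -> (m (idx t) + m (idx (k + t)) + m (idx (4 * k + 1)) =
                              m' (idx t) + m' (idx (k + t)) + m' (idx (4 * k + 1)))%N,
      forall t, (t < k)%N ->
        (m (idx (2 * k + t)) + m (idx (3 * k + t)) + m (idx (4 * k)) =
         m' (idx (2 * k + t)) + m' (idx (3 * k + t)) + m' (idx (4 * k)))%N
    & (m (idx (4 * k)) + m (idx (4 * k + 1)) = m' (idx (4 * k)) + m' (idx (4 * k + 1)))%N].
Proof.
move=> E; have row t (ht : (t < 2 * k + 1)%N) :=
  congr1 (fun mm : 'X_{1..2 * k + 1} => mm (ridx k t)) E.
split.
- by move=> t ht; have := row t ltac:(lia); rewrite !Adeg_row ?ht //; lia.
- move=> t ht; have := row (k + t)%N ltac:(lia); rewrite !Adeg_row; [|lia..].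
  have -> : (k + t < k)%N = false by lia.
  have -> : (k + t < 2 * k)%N = true by lia.
  have -> : (k + t + k = 2 * k + t)%N by lia.
  by have -> : (k + t + 2 * k = 3 * k + t)%N by lia.
- by have := row (2 * k)%N ltac:(lia); rewrite !Adeg_row ?ltnn ?ifF //; lia.
Qed.

Definition lex_standard (mf : 'X_{1..n}) :=
  (forall i, (i < k)%N -> mf (idx i) = 0%N /\ mf (idx (2 * k + i)) = 0%N) /\
  (mf (idx (4 * k)) = 0%N \/ exists i, (i < k)%N /\ mf (idx (k + i)) = 0%N).

Hypothesis hk : (1 <= k)%N.

Lemma lex_standard_min (m mf : 'X_{1..n}) :
  lex_standard mf -> Adeg m = Adeg mf -> ~ lex_lt m mf.
Proof.
move=> [S1 S2] /Adeg_eq_rows [R1 R2 R3] /lex_ltP [i [hlt Heq]].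
have hi := ltn_ord i.
move: hlt; rewrite -(idx_val i) => hlt.
have H j : (j < i)%N -> m (idx j) = mf (idx j).
  by move=> hj; apply: Heq; rewrite idxK //; lia.
set vi := val i in hlt hi H.
case: (ltnP vi k) => c1; first by have [] := S1 vi c1; lia.
case: (ltnP vi (2 * k)) => c2.
  have := R1 (vi - k)%N ltac:(lia).
  have -> : (k + (vi - k) = vi)%N by lia.
  have := H (vi - k)%N ltac:(lia).
  case: S2 => [z|[l [hl z]]]; first by lia.
  have := R1 l hl; have := H l ltac:(lia); lia.
case: (ltnP vi (3 * k)) => c3.
  have [_] := S1 (vi - 2 * k)%N ltac:(lia).
  have -> : (2 * k + (vi - 2 * k) = vi)%N by lia.
  lia.
have e0 := R1 0%N hk; have h0 := H 0%N ltac:(lia); have hk' := H (k + 0)%N ltac:(lia).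
case: (ltnP vi (4 * k)) => c4.
  have := R2 (vi - 3 * k)%N ltac:(lia).
  have -> : (3 * k + (vi - 3 * k) = vi)%N by lia.
  have := H (2 * k + (vi - 3 * k))%N ltac:(lia).
  lia.
case: (eqVneq vi (4 * k)%N) => c5; first by move: hlt; rewrite c5; lia.
have c6 : vi = (4 * k + 1)%N by lia.
have := H (4 * k)%N ltac:(lia).
by move: hlt; rewrite c6; lia.
Qed.
End Standard.

Section LexGB.
Variable k : nat.
Variable K : fieldType.
Local Notation n := (4 * k + 2)%N.
Local Notation A := (A_mat k).
Local Notation idx := (idx k).

Lemma mnm1_idx a j : (a < n)%N -> (j < n)%N -> U_(idx a)%MM (idx j) = (a == j).
Proof. by move=> ha hj; rewrite mnm1E -val_eqE /= !idxK. Qed.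

Lemma mdividesP (m1 m2 : 'X_{1..n}) :
  (forall l, (l < n)%N -> (m1 (idx l) <= m2 (idx l))%N) -> mdivides m1 m2.
Proof. by move=> H; apply/forallP => l; rewrite -(idx_val l); apply: H. Qed.

Lemma mdividesN (m1 m2 : 'X_{1..n}) l :
  (l < n)%N -> (m2 (idx l) < m1 (idx l))%N -> ~~ mdivides m1 m2.
Proof. by move=> hl h; apply/negP => /forallP /(_ (idx l)); rewrite leqNgt h. Qed.

Lemma posm_simple_move a b : paired k a b -> posm (simple_move k a b) = U_(idx a)%MM.
Proof.
move=> hp; have [ab b4 [ha hb]] := paired_bounds hp.
apply/mnmP => j; rewrite -(idx_val j) posm_idx // mnm1_idx // vat_simple_move //.
by do ![case: eqP => ?]; rewrite /ppart /=; lia.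
Qed.

Lemma negm_simple_move a b : paired k a b -> negm (simple_move k a b) = U_(idx b)%MM.
Proof.
move=> hp; have [ab b4 [ha hb]] := paired_bounds hp.
apply/mnmP => j; rewrite -(idx_val j) negm_idx // mnm1_idx // vat_simple_move //.
by do ![case: eqP => ?]; rewrite /ppart /=; lia.
Qed.

Lemma posm_bridge_move j : (j < n)%N ->
  posm (bridge_move k) (idx j) = ((k <= j < 2 * k) || (j == 4 * k))%N.
Proof.
by move=> hj; rewrite posm_idx // vat_bridge_move; do ![case: ifP => ?]; rewrite /ppart /=; lia.
Qed.

Lemma negm_bridge_move j : (j < n)%N ->
  negm (bridge_move k) (idx j) = ((3 * k <= j < 4 * k) || (j == 4 * k + 1))%N.
Proof.
by move=> hj; rewrite negm_idx // vat_bridge_move; do ![case: ifP => ?]; rewrite /ppart /=; lia.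
Qed.

Lemma is_LM_simple_move a b : paired k a b ->
  is_LM (binom K (simple_move k a b)) U_(idx a)%MM /\
  (binom K (simple_move k a b))@_U_(idx a)%MM = 1.
Proof.
move=> hp; have [ab b4 [ha hb]] := paired_bounds hp.
rewrite /binom posm_simple_move // negm_simple_move //; apply: is_LM_binomial.
apply/lex_ltP; exists (idx a); rewrite !mnm1_idx //; split; first by rewrite eqxx gtn_eqF.
move=> j; rewrite idxK // => hj; rewrite -(idx_val j) !mnm1_idx //; lia.
Qed.

Lemma is_LM_bridge_move :
  is_LM (binom K (bridge_move k)) (posm (bridge_move k)) /\
  (binom K (bridge_move k))@_(posm (bridge_move k)) = 1.
Proof.
apply: is_LM_binomial; apply/lex_ltP; exists (idx k).
rewrite posm_bridge_move ?negm_bridge_move; try lia; split; first lia.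
by move=> j; rewrite -(idx_val j) idxK ?posm_bridge_move ?negm_bridge_move // idxK; lia.
Qed.

Lemma msupp_binom_simple_move a b mm : paired k a b ->
  mm \in msupp (binom K (simple_move k a b)) -> mm = U_(idx a)%MM \/ mm = U_(idx b)%MM.
Proof.
move=> hp; have [ab b4 [ha hb]] := paired_bounds hp.
rewrite /binom posm_simple_move // negm_simple_move // msupp_binomial.
  by case/orP => /eqP ->; [left|right].
by rewrite eq_mnm1 -val_eqE /= !idxK // ltn_eqF.
Qed.

Lemma msupp_binom_bridge_move mm : mm \in msupp (binom K (bridge_move k)) ->
  mm = posm (bridge_move k) \/ mm = negm (bridge_move k).
Proof.
have ne : posm (bridge_move k) != negm (bridge_move k).
  apply/eqP => /(congr1 (fun m : 'X_{1..n} => m (idx k))).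
  rewrite posm_bridge_move ?negm_bridge_move; lia.
by rewrite /binom msupp_binomial // => /orP[]/eqP ->; [left|right].
Qed.

Definition paired_seq : seq (nat * nat) :=
  [seq (i, k + i)%N | i <- iota 0 k] ++ [seq (2 * k + i, 3 * k + i)%N | i <- iota 0 k].

Lemma paired_seqP a b : ((a, b) \in paired_seq) <-> paired k a b.
Proof.
rewrite mem_cat; split.
  by case/orP => /mapP [i]; rewrite mem_iota add0n => hi [-> ->]; [left|right]; exists i.
case=> [[i [hi [-> ->]]]|[i [hi [-> ->]]]]; apply/orP; [left|right];
  by apply/mapP; exists i; rewrite // mem_iota add0n.
Qed.

Definition lexGB : seq {mpoly K[n]} :=
  rcons [seq binom K (simple_move k ab.1 ab.2) | ab <- paired_seq] (binom K (bridge_move k)).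

Lemma mem_lexGB g : g \in lexGB ->
  g = binom K (bridge_move k) \/ exists a b, paired k a b /\ g = binom K (simple_move k a b).
Proof.
rewrite mem_rcons inE => /orP[/eqP|/mapP [[a b] hab ->]]; first by left.
by right; exists a, b; split => //; apply/paired_seqP.
Qed.

Lemma simple_move_lexGB a b : paired k a b -> binom K (simple_move k a b) \in lexGB.
Proof.
move=> hp; rewrite mem_rcons inE; apply/orP; right.
by apply/mapP; exists (a, b) => //; apply/paired_seqP.
Qed.

Lemma bridge_move_lexGB : binom K (bridge_move k) \in lexGB.
Proof. by rewrite mem_rcons mem_head. Qed.

Lemma lexGB_tail g g' : g \in lexGB -> g' \in lexGB -> g' != g ->
  forall mg', is_LM g' mg' -> forall mm, mm \in msupp g -> ~~ mdivides mg' mm.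
Proof.
move=> hg hg' ne mg' hLM mm hmm.
case: (mem_lexGB hg') => [e'|[a' [b' [hp' e']]]]; subst g'.
- have e := is_LM_uniq hLM is_LM_bridge_move.1; subst mg'.
  case: (mem_lexGB hg) => [e|[a [b [hp e]]]]; subst g; first by rewrite eqxx in ne.
  have [ab b4 [ha hb]] := paired_bounds hp.
  apply: (@mdividesN _ _ (4 * k)%N); first by lia.
  rewrite posm_bridge_move; last by lia.
  by case: (msupp_binom_simple_move hp hmm) => ->; rewrite mnm1_idx //; try lia;
    rewrite (_ : (_ == _) = false) /=; try lia; rewrite eqxx orbT.
- have [ab' b4' [ha' hb']] := paired_bounds hp'.
  have e := is_LM_uniq hLM (is_LM_simple_move hp').1; subst mg'.
  apply: (@mdividesN _ _ a') => //; rewrite mnm1_idx // eqxx.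
  case: (mem_lexGB hg) => [e|[a [b [hp e]]]]; subst g.
  + have hx : ~~ ((k <= a' < 2 * k) || (a' == 4 * k))%N.
      by case: hp' => [[i [hi [-> _]]]|[i [hi [-> _]]]]; lia.
    have hy : ~~ ((3 * k <= a' < 4 * k) || (a' == 4 * k + 1))%N.
      by case: hp' => [[i [hi [-> _]]]|[i [hi [-> _]]]]; lia.
    case: (msupp_binom_bridge_move hmm) => ->; first by rewrite posm_bridge_move // (negbTE hx).
    by rewrite negm_bridge_move // (negbTE hy).
  + have [ab b4 [ha hb]] := paired_bounds hp.
    case: (msupp_binom_simple_move hp hmm) => ->; rewrite mnm1_idx //.
      case: eqP => // eaa.
      have [_ ebb] := paired_eq hp hp' (introT or4P (Or41 _ _ _ (introT eqP eaa))).
      by subst; rewrite eqxx in ne.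
    case: eqP => // eba.
    have [eaa ebb] := paired_eq hp hp' (introT or4P (Or43 _ _ _ (introT eqP eba))).
    lia.
Qed.

Hypothesis hk : (1 <= k)%N.

(* A standard leading monomial would be the only monomial of f in its A_k-degree
   (lex_standard_min), so f would not lie in the kernel of toric_hom. *)
Lemma toric_LM_nonstandard f mf :
  toric_ideal K A f -> is_LM f mf -> ~ lex_standard mf.
Proof.
move=> hf hLM hstd.
have := congr1 (mcoeff (Adeg mf)) (toric_hom_ideal hf).
rewrite toric_hom_coef mcoeff0 (bigD1_seq mf) //=; last by case: hLM.
rewrite eqxx mulr1 big1_seq ?addr0.
  by move=> h; case: hLM; rewrite mcoeff_msupp h eqxx.
move=> m /andP[nem hm]; case: eqP => [e|]; last by rewrite mulr0.
have := hLM.2 m hm; rewrite /lex_le (negbTE nem) /= => hlt.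
by case: (lex_standard_min hk hstd e hlt).
Qed.

Lemma nonstandard_lexGB_divisor mf : ~ lex_standard mf ->
  exists g mg, [/\ g \in lexGB, is_LM g mg & mdivides mg mf].
Proof.
move=> hns.
case: (pickP (fun i : 'I_k => (0 < mf (idx i))%N || (0 < mf (idx (2 * k + i)))%N)) =>
  [i /orP[h|h] | H0].
- have hp : paired k i (k + i)%N by left; exists i.
  exists (binom K (simple_move k i (k + i))), U_(idx i)%MM.
  split; [exact: simple_move_lexGB | exact: (is_LM_simple_move hp).1 |].
  have hi := ltn_ord i.
  by apply: mdividesP => l hl; rewrite mnm1_idx //; try lia; case: eqP => [<-|].
- have hp : paired k (2 * k + i)%N (3 * k + i)%N by right; exists i.
  exists (binom K (simple_move k (2 * k + i) (3 * k + i))), U_(idx (2 * k + i))%MM.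
  split; [exact: simple_move_lexGB | exact: (is_LM_simple_move hp).1 |].
  have hi := ltn_ord i.
  by apply: mdividesP => l hl; rewrite mnm1_idx //; try lia; case: eqP => [<-|].
case: (boolP ((0 < mf (idx (4 * k)))%N && [forall i : 'I_k, (0 < mf (idx (k + i)))%N])) =>
  [/andP[h4 /forallP hmid] | hn].
  exists (binom K (bridge_move k)), (posm (bridge_move k)).
  split; [exact: bridge_move_lexGB | exact: is_LM_bridge_move.1 |].
  apply: mdividesP => l hl; rewrite posm_bridge_move //.
  case: (boolP (k <= l < 2 * k)%N) => hl2 /=; last by case: eqP => [->|].
  have hl3 : (l - k < k)%N by lia.
  by have := hmid (Ordinal hl3); rewrite /= (_ : (k + (l - k) = l)%N) //; lia.
case: hns; split.
  by move=> i hi; have := H0 (Ordinal hi); rewrite /= => /norP []; lia.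
move: hn; rewrite negb_and => /orP[h|/forallPn [i h]]; [left|right]; first by lia.
by exists i; split => //; lia.
Qed.

Lemma lexGB_reduced : is_reduced_GB (toric_ideal K A) lexGB.
Proof.
split.
  move=> g /mem_lexGB [->|[a [b [hp ->]]]]; apply: binom_toric;
    [exact: bridge_move_ker | exact: simple_move_ker].
split.
  by move=> f hf _ mf hLM; apply: nonstandard_lexGB_divisor; exact: toric_LM_nonstandard hLM.
split; last exact: lexGB_tail.
move=> g /mem_lexGB [->|[a [b [hp ->]]]].
  by exists (posm (bridge_move k)); exact: is_LM_bridge_move.
by exists U_(idx a)%MM; exact: is_LM_simple_move.
Qed.

Lemma R_lex_simple_move a b : paired k a b -> R_lex K A (simple_move k a b).
Proof.
move=> hp; exists lexGB; split; first exact: lexGB_reduced.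
split; first exact: simple_move_lexGB.
by rewrite posm_simple_move //; exact: (is_LM_simple_move hp).1.
Qed.
End LexGB.

Section RLex.
Variable k : nat.
Variable K : fieldType.
Local Notation n := (4 * k + 2)%N.
Local Notation A := (A_mat k).
Local Notation idx := (idx k).

Lemma ker_unit_bound (d : 'cV[int]_n) a b : A *m d = 0 -> vat d (4 * k)%N = 0 ->
  paired k a b -> vat d a != 0 -> (forall l, (l < n)%N -> vat d l <= (a == l)%:R) ->
  d = simple_move k a b.
Proof.
move=> Ad0 d4 hp nza Hle; have [d5 Hp] := ker_paired Ad0 d4.
have [ab b4 [ha hb]] := paired_bounds hp.
have [nab nba] : (a == b) = false /\ (b == a) = false by split; apply/eqP; lia.
apply: eq_vat => l hl; rewrite vat_simple_move //.
case: (index_cover hl) => [->|[->|[a' [b' [hp' el]]]]].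
- have [/negbTE -> /negbTE ->] : (4 * k != a)%N /\ (4 * k != b)%N by split; apply/eqP; lia.
  by rewrite d4 subrr.
- have [/negbTE -> /negbTE ->] : (4 * k + 1 != a)%N /\ (4 * k + 1 != b)%N.
    by split; apply/eqP; lia.
  by rewrite d5 subrr.
- have [ab' b4' [ha' hb']] := paired_bounds hp'.
  have s' := Hp a' b' hp'; have sab := Hp a b hp.
  have va := Hle a ha; have vb := Hle b hb; have va' := Hle a' ha'; have vb' := Hle b' hb'.
  case: (boolP [|| a == a', a == b', b == a' | b == b']) => hu.
    have [ea eb] := paired_eq hp hp' hu; subst a' b'.
    move: va vb; rewrite eqxx nab => va vb.
    by case: el => ->; rewrite ?eqxx ?nab ?nba /=; lia.
  move: hu; rewrite !negb_or => /and4P[n1 n2 n3 n4].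
  move: va' vb'; rewrite (negbTE n1) (negbTE n2) /= => va' vb'.
  case: el => ->.
    by rewrite (eq_sym a' a) (negbTE n1) (eq_sym a' b) (negbTE n3) /=; lia.
  by rewrite (eq_sym b' a) (negbTE n2) (eq_sym b' b) (negbTE n4) /=; lia.
Qed.

(* The binomial of e_a - e_b lies in I_{A_k} with leading monomial x_a; hence the
   leading monomial of some basis element divides x_a, and reducedness of the basis
   leaves only the binomial of d itself, unless x_a divides neither x^{d+} nor x^{d-}. *)
Lemma R_lex_unit_bound (d : 'cV[int]_n) a b : paired k a b -> R_lex K A d ->
  vat d a = 0 \/ mdivides (posm d) U_(idx a)%MM.
Proof.
move=> hp [G [[_ [Ginit [_ Gtail]]] [hdG hdLM]]].
have [ab b4 [ha hb]] := paired_bounds hp.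
have [hLa _] := is_LM_simple_move K hp.
have nz : binom K (simple_move k a b) != 0.
  by apply/eqP => e; move: hLa.1; rewrite e msupp0.
have [g [mg [hg hLg hdiv]]] :=
  Ginit _ (binom_toric K (simple_move_ker hp)) nz _ hLa.
case: (eqVneq g (binom K d)) => [eg|neg].
  by subst g; rewrite (is_LM_uniq hLg hdLM) in hdiv; right.
left; have not_div := Gtail _ _ hdG hg neg _ hLg.
have hpos := not_div _ hdLM.1.
have hneg : ~~ mdivides mg (negm d).
  apply: not_div; rewrite /binom msupp_binomial ?eqxx ?orbT //.
  by apply: contraTneq hdLM.1; rewrite /binom => ->; rewrite subrr msupp0.
have Hmg l : (mg l <= U_(idx a)%MM l)%N by move/forallP: hdiv => /(_ l).
case: (ltrgtP (vat d a) 0) => // h; exfalso.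
  move/negP: hneg; apply; apply/forallP => l; apply: leq_trans (Hmg l) _.
  by rewrite mnm1E; case: eqP => //= <-; rewrite negm_idx // /ppart; lia.
move/negP: hpos; apply; apply/forallP => l; apply: leq_trans (Hmg l) _.
by rewrite mnm1E; case: eqP => //= <-; rewrite posm_idx // /ppart; lia.
Qed.

Lemma R_lex_simple (d : 'cV[int]_n) : A *m d = 0 -> vat d (4 * k)%N = 0 -> d <> 0 ->
  R_lex K A d -> exists a b, paired k a b /\ d = simple_move k a b.
Proof.
move=> Ad0 d4 nz hR.
have [a [b [hp nza]]] := ker_nonzero_pair Ad0 d4 nz.
have [ab b4 [ha hb]] := paired_bounds hp.
case: (R_lex_unit_bound hp hR) => [da0|/forallP hdiv]; first by rewrite da0 eqxx in nza.
exists a, b; split => //; apply: ker_unit_bound => // l hl.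
have := hdiv (idx l); rewrite posm_idx // mnm1_idx //.
by case: eqP => _ /=; rewrite /ppart; lia.
Qed.

Hypothesis hk : (1 <= k)%N.

Lemma graver_iff_R_lex (d : 'cV[int]_n) : A *m d = 0 -> vat d (4 * k)%N = 0 -> d <> 0 ->
  graver A d <-> R_lex K A d \/ R_lex K A (- d).
Proof.
move=> Ad0 d4 nz; split.
  case/(graver_simple Ad0 d4) => a [b [hp [->|->]]]; [left|right; rewrite opprK];
  exact: R_lex_simple_move.
case=> [|hR].
  by case/(R_lex_simple Ad0 d4 nz) => a [b [hp ->]]; exact: graver_simple_move.
have [a [b [hp /eqP]]] : exists a b, paired k a b /\ - d = simple_move k a b.
  apply: R_lex_simple => //; first by rewrite mulmxN Ad0 oppr0.
    by rewrite vatN d4 oppr0.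
  by move/eqP; rewrite oppr_eq0 => /eqP.
by rewrite eqr_oppLR => /eqP ->; apply: graver_opp; exact: graver_simple_move.
Qed.
End RLex.

Theorem lemma5 (K : fieldType) (k : nat) (hk : (1 <= k)%N)
  (b : 'cV[int]_(2 * k + 1)) (s : int)
  (hl : l_b b <= s) (hu : s <= u_b b) :
  forall u v : 'cV[int]_(4 * k + 2), C_s b s u -> C_s b s v ->
    (fiber_adj (A_mat k) b (graver (A_mat k)) u v <->
     fiber_adj (A_mat k) b (R_lex K (A_mat k)) u v).
Proof.
move=> u v [[_ Au] su] [[_ Av] sv].
have diff x y : A_mat k *m x = b -> A_mat k *m y = b -> vat x (4 * k) = s ->
    vat y (4 * k) = s -> x <> y ->
    graver (A_mat k) (x - y) <-> R_lex K (A_mat k) (x - y) \/ R_lex K (A_mat k) (y - x).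
  move=> Ax Ay sx sy nxy; rewrite -[y - x]opprB; apply: graver_iff_R_lex => //.
  - by rewrite mulmxBr Ax Ay subrr.
  - by rewrite vatB sx sy subrr.
  - by move/eqP; rewrite subr_eq0 => /eqP.
rewrite /fiber_adj; split=> -[Fu [Fv [nuv H]]]; do 3 (split => //);
  have := diff u v Au Av su sv nuv; have := diff v u Av Au sv su (nesym nuv); tauto.
Qed.
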